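(* Let $\beta\ge0$ be an integer, $x_0,y_0\in\mathbb{R}$, $a,b>0$, and $\Upsilon=[x_0-a,x_0+a]\times[y_0-b,y_0+b]$. Let $f:\Upsilon\to\mathbb{R}$ be continuous such that all partial derivatives $D^pf$ with $[p]=p_1+p_2\le\beta$ exist, $|D^pf(x,y)|\le1$ for all $(x,y)\in\Upsilon$ and all $p$ with $[p]\le\beta$ (with $D^0f=f$), and $$|D^pf(x,y)-D^pf(x',\tilde y)|\le\max\{|x-x'|,|y-\tilde y|\}\quad\text{for all }(x,y),(x',\tilde y)\in\Upsilon,\ [p]=\beta.$$ Let $y$ be a solution of $y'(x)=f(x,y(x))$, $y(x_0)=y_0$, on $[x_0-a,x_0+a]$ with $(x,y(x))\in\Upsilon$, and let $\alpha=a\wedge b$. Then for all $x,x'\in[x_0-\alpha,x_0+\alpha]$: $|y^{(k)}(x)|\le2^{k-1}(k-1)!$ for every $1\le k\le\beta+1$, and $$|y^{(\beta+1)}(x)-y^{(\beta+1)}(x')|\le2^{\beta+1}(\beta+1)!\,|x-x'|.$$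
   Context: For a multi-index $p=(p_1,p_2)$ of non-negative integers, $[p]=p_1+p_2$ and $D^pf=\partial^{[p]}f/\partial x^{p_1}\partial y^{p_2}$. *)

From Stdlib Require Import Reals Lra List.
Open Scope R_scope.

Definition cint (c r : R) (t : R) : Prop := c - r <= t <= c + r.

Definition rect (x0 y0 a b : R) (x y : R) : Prop := cint x0 a x /\ cint y0 b y.

Definition has_deriv_within (I : R -> Prop) (g : R -> R) (t l : R) : Prop :=
  forall eps : R, 0 < eps -> exists delta : R, 0 < delta /\
    forall h : R, h <> 0 -> Rabs h < delta -> I (t + h) ->
      Rabs ((g (t + h) - g t) / h - l) < eps.

Definition cont_on_rect (x0 y0 a b : R) (f : R -> R -> R) : Prop :=
  forall x y, rect x0 y0 a b x y ->
  forall eps, 0 < eps -> exists delta, 0 < delta /\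
    forall x' y', rect x0 y0 a b x' y' ->
      Rmax (Rabs (x' - x)) (Rabs (y' - y)) < delta ->
      Rabs (f x' y' - f x y) < eps.

(* Family of iterated partial derivatives of f on the rectangle, up to order
   beta, indexed by words over {x,y}: true = d/dx, false = d/dy. *)
Definition partials_family (x0 y0 a b : R) (beta : nat) (f : R -> R -> R)
  (G : list bool -> R -> R -> R) : Prop :=
  (forall x y, rect x0 y0 a b x y -> G nil x y = f x y) /\
  (forall w, (length w < beta)%nat -> forall x y, rect x0 y0 a b x y ->
     has_deriv_within (cint x0 a) (fun s => G w s y) x (G (true :: w) x y) /\
     has_deriv_within (cint y0 b) (fun s => G w x s) y (G (false :: w) x y)).

From Stdlib Require Import Reals List Arith Factorial Lra Lia.
Open Scope R_scope.

(* Along the solution, d/dx D^w f(x, y(x)) = D^(xw) f + D^(yw) f * f. Hence, by induction,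
   y^(k+1) is a sum of at most 2^k k! products of at most k+1 partial derivatives of order
   at most k evaluated at (x, y(x)): differentiating a product of j factors gives 2j products
   of at most j+1 factors. Every factor is bounded by 1, which bounds y^(k+1). Every factor
   is also 2-Lipschitz along the solution (partials of order < beta are 1-Lipschitz in each
   variable by the mean value theorem, those of order beta by hypothesis, and y is
   1-Lipschitz since |y'| = |f| <= 1), so y^(beta+1) is Lipschitz with constant
   2^beta beta! * 2 (beta+1). *)

Definition affine_ext (p q : R) (g : R -> R) (lp lq : R) (s : R) : R :=
  if Rlt_dec s p then g p + lp * (s - p)
  else if Rlt_dec q s then g q + lq * (s - q) else g s.

Lemma affine_ext_in p q g lp lq s : p <= s <= q -> affine_ext p q g lp lq s = g s.
Proof.
  intros Hs; unfold affine_ext.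
  destruct (Rlt_dec s p); [lra|]. destruct (Rlt_dec q s); [lra|]. reflexivity.
Qed.

(* Turns a one-sided derivative at an endpoint into a two-sided one, so that Stdlib's
   product rule and mean value theorem apply to derivatives within an interval. *)
Lemma derivable_pt_lim_affine_ext p q g t l lp lq : p <= t <= q ->
  has_deriv_within (fun s => p <= s <= q) g t l ->
  (t = p -> lp = l) -> (t = q -> lq = l) ->
  derivable_pt_lim (affine_ext p q g lp lq) t l.
Proof.
  intros Ht Hd Hp Hq eps Heps.
  destruct (Hd eps Heps) as [d [Hd0 Hdh]].
  set (dl := if Req_EM_T t p then 1 else t - p).
  set (dr := if Req_EM_T t q then 1 else q - t).
  assert (Hdl : 0 < dl /\ (t <> p -> dl <= t - p)).
  { unfold dl; destruct (Req_EM_T t p); split; intros; try lra; contradiction. }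
  assert (Hdr : 0 < dr /\ (t <> q -> dr <= q - t)).
  { unfold dr; destruct (Req_EM_T t q); split; intros; try lra; contradiction. }
  assert (Hpos : 0 < Rmin d (Rmin dl dr)) by (repeat apply Rmin_glb_lt; lra).
  exists (mkposreal _ Hpos); simpl; intros h Hh Hhd.
  assert (Hh' : Rabs h < d /\ Rabs h < dl /\ Rabs h < dr).
  { pose proof (Rmin_l d (Rmin dl dr)); pose proof (Rmin_r d (Rmin dl dr)).
    pose proof (Rmin_l dl dr); pose proof (Rmin_r dl dr); lra. }
  pose proof (Rle_abs h); pose proof (Rle_abs (- h)); rewrite Rabs_Ropp in *.
  assert (Hslope : forall c lc, lc = l ->
    Rabs ((c + lc * (t + h - t) - c) / h - l) < eps).
  { intros c lc ->. replace ((c + l * (t + h - t) - c) / h - l) with 0 by (field; auto).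
    rewrite Rabs_R0; lra. }
  rewrite (affine_ext_in p q g lp lq t Ht); unfold affine_ext.
  destruct (Rlt_dec (t + h) p).
  - destruct (Req_dec t p) as [->|Htp]; [apply Hslope; auto|].
    specialize (proj2 Hdl Htp); lra.
  - destruct (Rlt_dec q (t + h)).
    + destruct (Req_dec t q) as [->|Htq]; [apply Hslope; auto|].
      specialize (proj2 Hdr Htq); lra.
    + apply Hdh; lra.
Qed.

Lemma has_deriv_within_restrict (F g : R -> R) (I : R -> Prop) t l :
  derivable_pt_lim F t l -> (forall s, I s -> F s = g s) -> I t ->
  has_deriv_within I g t l.
Proof.
  intros HF HFg It eps Heps. destruct (HF eps Heps) as [d Hd].
  exists d; split; [apply cond_pos|]. intros h Hh Hhd Ih.
  rewrite <- (HFg _ Ih), <- (HFg _ It). auto.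
Qed.

Lemma has_deriv_within_sub (I J : R -> Prop) g t l :
  (forall s, J s -> I s) -> has_deriv_within I g t l -> has_deriv_within J g t l.
Proof.
  intros HJI Hd eps Heps. destruct (Hd eps Heps) as [d [Hd0 Hdh]].
  exists d; split; auto.
Qed.

Lemma has_deriv_within_const (I : R -> Prop) c t : has_deriv_within I (fun _ => c) t 0.
Proof.
  intros eps Heps. exists 1; split; [lra|]. intros h Hh _ _.
  replace ((c - c) / h - 0) with 0 by (field; auto). rewrite Rabs_R0; lra.
Qed.

Lemma has_deriv_within_plus (I : R -> Prop) g1 g2 t l1 l2 :
  has_deriv_within I g1 t l1 -> has_deriv_within I g2 t l2 ->
  has_deriv_within I (fun s => g1 s + g2 s) t (l1 + l2).
Proof.
  intros H1 H2 eps Heps.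
  destruct (H1 (eps / 2)) as [d1 [Hd1 Hd1h]]; [lra|].
  destruct (H2 (eps / 2)) as [d2 [Hd2 Hd2h]]; [lra|].
  exists (Rmin d1 d2); split; [apply Rmin_glb_lt; auto|].
  intros h Hh Hhd Ih.
  pose proof (Rmin_l d1 d2); pose proof (Rmin_r d1 d2).
  specialize (Hd1h h Hh ltac:(lra) Ih); specialize (Hd2h h Hh ltac:(lra) Ih).
  replace ((g1 (t + h) + g2 (t + h) - (g1 t + g2 t)) / h - (l1 + l2))
    with (((g1 (t + h) - g1 t) / h - l1) + ((g2 (t + h) - g2 t) / h - l2)) by (field; auto).
  eapply Rle_lt_trans; [apply Rabs_triang|]. lra.
Qed.

Lemma has_deriv_within_mult p q g1 g2 t l1 l2 : p <= t <= q ->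
  has_deriv_within (fun s => p <= s <= q) g1 t l1 ->
  has_deriv_within (fun s => p <= s <= q) g2 t l2 ->
  has_deriv_within (fun s => p <= s <= q) (fun s => g1 s * g2 s) t (l1 * g2 t + g1 t * l2).
Proof.
  intros Ht H1 H2.
  pose proof (derivable_pt_lim_mult _ _ _ _ _
    (derivable_pt_lim_affine_ext p q g1 t l1 l1 l1 Ht H1 (fun _ => eq_refl) (fun _ => eq_refl))
    (derivable_pt_lim_affine_ext p q g2 t l2 l2 l2 Ht H2 (fun _ => eq_refl) (fun _ => eq_refl)))
    as Hprod.
  rewrite !(affine_ext_in p q _ _ _ t Ht) in Hprod.
  apply (has_deriv_within_restrict _ _ _ _ _ Hprod); auto.
  intros s Hs; unfold mult_fct; rewrite !(affine_ext_in p q _ _ _ s Hs); reflexivity.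
Qed.

Lemma increment_bound_lt g g' C E u v : u < v ->
  (forall s, u <= s <= v -> has_deriv_within (fun r => u <= r <= v) g s (g' s)) ->
  (forall s, u <= s <= v -> Rabs (g' s - C) <= E) ->
  Rabs (g v - g u - C * (v - u)) <= E * (v - u).
Proof.
  intros Huv Hd Hb.
  destruct (MVT_cor2 (affine_ext u v g (g' u) (g' v)) g' u v Huv) as [c [Hc Hcuv]].
  { intros c Hc; apply derivable_pt_lim_affine_ext; auto; intros ->; reflexivity. }
  rewrite !affine_ext_in in Hc by lra. rewrite Hc.
  replace (g' c * (v - u) - C * (v - u)) with ((g' c - C) * (v - u)) by ring.
  rewrite Rabs_mult, (Rabs_right (v - u)) by lra.
  apply Rmult_le_compat_r; [lra|]. apply Hb; lra.
Qed.

Lemma increment_bound p q g g' C E u v : p <= u <= q -> p <= v <= q ->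
  (forall s, p <= s <= q -> has_deriv_within (fun r => p <= r <= q) g s (g' s)) ->
  (forall s, Rmin u v <= s <= Rmax u v -> Rabs (g' s - C) <= E) ->
  Rabs (g v - g u - C * (v - u)) <= E * Rabs (v - u).
Proof.
  intros Hu Hv Hd Hb.
  assert (Hd' : forall u' v', p <= u' -> v' <= q -> forall s, u' <= s <= v' ->
    has_deriv_within (fun r => u' <= r <= v') g s (g' s)).
  { intros u' v' Hu' Hv' s Hs. apply has_deriv_within_sub with (fun r => p <= r <= q).
    - intros r Hr; lra.
    - apply Hd; lra. }
  destruct (Rtotal_order u v) as [Huv|[<-|Hvu]].
  - rewrite (Rabs_right (v - u)) by lra.
    apply (increment_bound_lt g g'); [lra| apply Hd'; lra|].
    intros s Hs; apply Hb; rewrite Rmin_left, Rmax_right; lra.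
  - replace (g u - g u - C * (u - u)) with 0 by ring.
    rewrite Rminus_diag, !Rabs_R0; lra.
  - rewrite (Rabs_left (v - u)) by lra.
    replace (g v - g u - C * (v - u)) with (- (g u - g v - C * (u - v))) by ring.
    rewrite Rabs_Ropp; replace (E * - (v - u)) with (E * (u - v)) by ring.
    apply (increment_bound_lt g g'); [lra| apply Hd'; lra|].
    intros s Hs; apply Hb; rewrite Rmin_right, Rmax_left; lra.
Qed.

Lemma lipschitz_of_deriv_bound p q g g' M u v : p <= u <= q -> p <= v <= q ->
  (forall s, p <= s <= q -> has_deriv_within (fun r => p <= r <= q) g s (g' s)) ->
  (forall s, p <= s <= q -> Rabs (g' s) <= M) ->
  Rabs (g v - g u) <= M * Rabs (v - u).
Proof.
  intros Hu Hv Hd Hb.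
  replace (g v - g u) with (g v - g u - 0 * (v - u)) by ring.
  apply (increment_bound p q g g'); auto.
  intros s Hs; rewrite Rminus_0_r; apply Hb.
  unfold Rmin, Rmax in Hs; destruct (Rle_dec u v); lra.
Qed.

Lemma Rabs_between u v s : Rmin u v <= s <= Rmax u v -> Rabs (s - u) <= Rabs (v - u).
Proof.
  unfold Rmin, Rmax; intros Hs; destruct (Rle_dec u v);
    unfold Rabs; destruct (Rcase_abs (s - u)); destruct (Rcase_abs (v - u)); lra.
Qed.

Lemma cint_between c r u v s : cint c r u -> cint c r v -> Rmin u v <= s <= Rmax u v -> cint c r s.
Proof. unfold cint, Rmin, Rmax; intros; destruct (Rle_dec u v); lra. Qed.

(* A monomial is a product of partial derivatives D^w f, a polynomial a sum of monomials. *)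
Notation monomial := (list (list bool)).
Notation polynomial := (list monomial).

Fixpoint eval_mono (u : list bool -> R) (m : monomial) : R :=
  match m with nil => 1 | w :: m' => u w * eval_mono u m' end.

Fixpoint eval_poly (u : list bool -> R) (P : polynomial) : R :=
  match P with nil => 0 | m :: P' => eval_mono u m + eval_poly u P' end.

Lemma eval_poly_app u P Q : eval_poly u (P ++ Q) = eval_poly u P + eval_poly u Q.
Proof. induction P as [|m P IH]; simpl; [ring| rewrite IH; ring]. Qed.

Lemma eval_poly_map_cons u w P : eval_poly u (map (cons w) P) = u w * eval_poly u P.
Proof. induction P as [|m P IH]; simpl; [ring| rewrite IH; ring]. Qed.

Lemma eval_mono_bound u m : (forall w, In w m -> Rabs (u w) <= 1) -> Rabs (eval_mono u m) <= 1.
Proof.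
  induction m as [|w m IH]; intros Hm; simpl; [rewrite Rabs_R1; lra|].
  rewrite Rabs_mult.
  assert (Hw : Rabs (u w) <= 1) by (apply Hm; simpl; auto).
  assert (Hm' : Rabs (eval_mono u m) <= 1) by (apply IH; intros; apply Hm; simpl; auto).
  pose proof (Rabs_pos (u w)); pose proof (Rabs_pos (eval_mono u m)); nra.
Qed.

Lemma eval_poly_bound u P : (forall m w, In m P -> In w m -> Rabs (u w) <= 1) ->
  Rabs (eval_poly u P) <= INR (length P).
Proof.
  induction P as [|m P IH]; intros HP; simpl eval_poly; simpl length.
  { rewrite Rabs_R0; simpl; lra. }
  rewrite S_INR. eapply Rle_trans; [apply Rabs_triang|].
  assert (Rabs (eval_mono u m) <= 1) by (apply eval_mono_bound; intros; eapply HP; simpl; eauto).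
  assert (Rabs (eval_poly u P) <= INR (length P)) by (apply IH; intros; eapply HP; simpl; eauto).
  lra.
Qed.

Lemma eval_mono_lipschitz u v e m :
  (forall w, In w m -> Rabs (u w) <= 1 /\ Rabs (v w) <= 1 /\ Rabs (u w - v w) <= e) ->
  Rabs (eval_mono u m - eval_mono v m) <= INR (length m) * e.
Proof.
  induction m as [|w m IH]; intros Hm; simpl eval_mono; simpl length.
  - replace (1 - 1) with 0 by ring; rewrite Rabs_R0; simpl; lra.
  - rewrite S_INR.
    destruct (Hm w (or_introl eq_refl)) as [Hu [_ Huv]].
    assert (Hv : Rabs (eval_mono v m) <= 1)
      by (apply eval_mono_bound; intros w' Hw'; apply Hm; simpl; auto).
    assert (IHm : Rabs (eval_mono u m - eval_mono v m) <= INR (length m) * e)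
      by (apply IH; intros; apply Hm; simpl; auto).
    replace (u w * eval_mono u m - v w * eval_mono v m)
      with (u w * (eval_mono u m - eval_mono v m) + (u w - v w) * eval_mono v m) by ring.
    eapply Rle_trans; [apply Rabs_triang|]. rewrite !Rabs_mult.
    pose proof (Rabs_pos (u w)); pose proof (Rabs_pos (eval_mono v m)).
    pose proof (Rabs_pos (eval_mono u m - eval_mono v m)); pose proof (Rabs_pos (u w - v w)).
    nra.
Qed.

Lemma eval_poly_lipschitz u v e d P :
  (forall m w, In m P -> In w m -> Rabs (u w) <= 1 /\ Rabs (v w) <= 1 /\ Rabs (u w - v w) <= e) ->
  (forall m, In m P -> (length m <= d)%nat) -> 0 <= e ->
  Rabs (eval_poly u P - eval_poly v P) <= INR (length P) * (INR d * e).
Proof.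
  intros HP Hd He; induction P as [|m P IH]; simpl eval_poly; simpl length.
  - replace (0 - 0) with 0 by ring; rewrite Rabs_R0; simpl; lra.
  - rewrite S_INR.
    replace (eval_mono u m + eval_poly u P - (eval_mono v m + eval_poly v P))
      with ((eval_mono u m - eval_mono v m) + (eval_poly u P - eval_poly v P)) by ring.
    eapply Rle_trans; [apply Rabs_triang|].
    assert (Rabs (eval_mono u m - eval_mono v m) <= INR (length m) * e)
      by (apply eval_mono_lipschitz; intros; eapply HP; simpl; eauto).
    assert (INR (length m) <= INR d) by (apply le_INR, Hd; simpl; auto).
    assert (Rabs (eval_poly u P - eval_poly v P) <= INR (length P) * (INR d * e))
      by (apply IH; intros; [eapply HP| apply Hd]; simpl; eauto).
    nra.
Qed.

(* Leibniz rule with d/dx D^w f(x, y(x)) = D^(true :: w) f + D^(false :: w) f * D^nil f. *)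
Fixpoint dmono (m : monomial) : polynomial :=
  match m with
  | nil => nil
  | w :: m' => ((true :: w) :: m') :: ((false :: w) :: nil :: m') :: map (cons w) (dmono m')
  end.

Fixpoint dpoly (P : polynomial) : polynomial :=
  match P with nil => nil | m :: P' => dmono m ++ dpoly P' end.

Fixpoint sol_poly (k : nat) : polynomial :=
  match k with O => (nil :: nil) :: nil | S k => dpoly (sol_poly k) end.

Lemma length_dmono m : length (dmono m) = (2 * length m)%nat.
Proof. induction m as [|w m IH]; simpl; [reflexivity| rewrite length_map, IH; lia]. Qed.

Lemma length_dpoly_le d P : (forall m, In m P -> (length m <= d)%nat) ->
  (length (dpoly P) <= 2 * d * length P)%nat.
Proof.
  induction P as [|m P IH]; intros HP; simpl; [lia|].
  rewrite length_app, length_dmono.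
  assert (length m <= d)%nat by (apply HP; simpl; auto).
  assert (length (dpoly P) <= 2 * d * length P)%nat by (apply IH; intros; apply HP; simpl; auto).
  nia.
Qed.

Lemma in_dpoly P r : In r (dpoly P) -> exists m, In m P /\ In r (dmono m).
Proof.
  induction P as [|m P IH]; simpl; [tauto|]. intros Hr.
  destruct (in_app_or _ _ _ Hr) as [H|H]; [exists m; auto|].
  destruct (IH H) as [m' [? ?]]; exists m'; auto.
Qed.

Lemma dmono_words n m r w : (forall w', In w' m -> (length w' <= n)%nat) ->
  In r (dmono m) -> In w r -> (length w <= S n)%nat.
Proof.
  revert r; induction m as [|w0 m IH]; intros r Hm Hr Hw; simpl in Hr; [contradiction|].
  assert (Hm0 : (length w0 <= n)%nat) by (apply Hm; simpl; auto).
  assert (Hm' : forall w', In w' m -> (length w' <= S n)%nat)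
    by (intros; apply le_S, Hm; simpl; auto).
  destruct Hr as [<-|[<-|Hr]]; simpl in Hw.
  - destruct Hw as [<-|Hw]; simpl; [lia| auto].
  - destruct Hw as [<-|[<-|Hw]]; simpl; [lia| lia| auto].
  - apply in_map_iff in Hr; destruct Hr as [r' [<- Hr']].
    destruct Hw as [<-|Hw]; [lia|].
    apply (IH r'); auto; intros; apply Hm; simpl; auto.
Qed.

Lemma dmono_degree m r : In r (dmono m) -> (length r <= S (length m))%nat.
Proof.
  revert r; induction m as [|w m IH]; intros r Hr; simpl in Hr; [contradiction|].
  destruct Hr as [<-|[<-|Hr]]; simpl; try lia.
  apply in_map_iff in Hr; destruct Hr as [r' [<- Hr']]; simpl.
  specialize (IH r' Hr'); lia.
Qed.

Lemma sol_poly_words k m w : In m (sol_poly k) -> In w m -> (length w <= k)%nat.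
Proof.
  revert m w; induction k as [|k IH]; intros m w Hm Hw; simpl in Hm.
  - destruct Hm as [<-|[]]; destruct Hw as [<-|[]]; simpl; lia.
  - destruct (in_dpoly _ _ Hm) as [m' [Hm' Hr]].
    exact (dmono_words k m' m w (fun w' => IH m' w' Hm') Hr Hw).
Qed.

Lemma sol_poly_degree k m : In m (sol_poly k) -> (length m <= S k)%nat.
Proof.
  revert m; induction k as [|k IH]; intros m Hm; simpl in Hm.
  - destruct Hm as [<-|[]]; simpl; lia.
  - destruct (in_dpoly _ _ Hm) as [m' [Hm' Hr]].
    pose proof (dmono_degree _ _ Hr); pose proof (IH _ Hm'); lia.
Qed.

Lemma length_sol_poly_le k : (length (sol_poly k) <= 2 ^ k * fact k)%nat.
Proof.
  induction k as [|k IH]; simpl; [lia|].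
  pose proof (length_dpoly_le (S k) (sol_poly k) (sol_poly_degree k)); nia.
Qed.

Lemma INR_pow2_fact k : INR (2 ^ k * fact k) = 2 ^ k * INR (fact k).
Proof. rewrite mult_INR, pow_INR; reflexivity. Qed.

Section AlongSolution.

Variables (beta : nat) (x0 y0 a b : R) (f : R -> R -> R).
Variables (G : list bool -> R -> R -> R) (y : R -> R).

Hypothesis G_partials : partials_family x0 y0 a b beta f G.
Hypothesis G_bound : forall w, (length w <= beta)%nat -> forall x z, rect x0 y0 a b x z ->
  Rabs (G w x z) <= 1.
Hypothesis G_top_lipschitz : forall w, length w = beta -> forall x z x' z',
  rect x0 y0 a b x z -> rect x0 y0 a b x' z' ->
  Rabs (G w x z - G w x' z') <= Rmax (Rabs (x - x')) (Rabs (z - z')).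
Hypothesis y_in_rect : forall x, cint x0 a x -> rect x0 y0 a b x (y x).
Hypothesis y_deriv : forall x, cint x0 a x -> has_deriv_within (cint x0 a) y x (f x (y x)).

Let G_nil x z : rect x0 y0 a b x z -> G nil x z = f x z.
Proof. apply G_partials. Qed.

Let G_deriv w : (length w < beta)%nat -> forall x z, rect x0 y0 a b x z ->
  has_deriv_within (cint x0 a) (fun s => G w s z) x (G (true :: w) x z) /\
  has_deriv_within (cint y0 b) (fun s => G w x s) z (G (false :: w) x z).
Proof. apply G_partials. Qed.

Lemma solution_lipschitz x x' : cint x0 a x -> cint x0 a x' -> Rabs (y x' - y x) <= Rabs (x' - x).
Proof.
  intros Hx Hx'; rewrite <- (Rmult_1_l (Rabs (x' - x))).
  apply (lipschitz_of_deriv_bound (x0 - a) (x0 + a) y (fun s => f s (y s)) 1); auto.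
  intros s Hs; rewrite <- G_nil by auto; apply G_bound; simpl; auto; lia.
Qed.

Lemma partials_lipschitz w : (length w <= beta)%nat -> forall x z x' z',
  rect x0 y0 a b x z -> rect x0 y0 a b x' z' ->
  Rabs (G w x' z' - G w x z) <= Rabs (x' - x) + Rabs (z' - z).
Proof.
  intros Hw x z x' z' [Hx Hz] [Hx' Hz'].
  pose proof (Rabs_pos (x' - x)); pose proof (Rabs_pos (z' - z)).
  destruct (Nat.eq_dec (length w) beta) as [Hlen|Hlen].
  - eapply Rle_trans; [apply (G_top_lipschitz w Hlen); split; auto|].
    apply Rmax_lub; lra.
  - assert (Hlt : (length w < beta)%nat) by lia.
    assert (Hzx : Rabs (G w x' z - G w x z) <= Rabs (x' - x)).
    { rewrite <- (Rmult_1_l (Rabs (x' - x))).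
      apply (lipschitz_of_deriv_bound (x0 - a) (x0 + a) (fun s => G w s z)
               (fun s => G (true :: w) s z) 1); auto.
      - intros s Hs; apply G_deriv; auto; split; auto.
      - intros s Hs; apply G_bound; [simpl; lia| split; auto]. }
    assert (Hzz : Rabs (G w x' z' - G w x' z) <= Rabs (z' - z)).
    { rewrite <- (Rmult_1_l (Rabs (z' - z))).
      apply (lipschitz_of_deriv_bound (y0 - b) (y0 + b) (fun s => G w x' s)
               (fun s => G (false :: w) x' s) 1); auto.
      - intros s Hs; apply G_deriv; auto; split; auto.
      - intros s Hs; apply G_bound; [simpl; lia| split; auto]. }
    replace (G w x' z' - G w x z) with ((G w x' z' - G w x' z) + (G w x' z - G w x z)) by ring.
    eapply Rle_trans; [apply Rabs_triang|]. lra.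
Qed.

Definition along (x : R) (w : list bool) : R := G w x (y x).

Lemma along_lipschitz w x x' : (length w <= beta)%nat -> cint x0 a x -> cint x0 a x' ->
  Rabs (along x' w - along x w) <= 2 * Rabs (x' - x).
Proof.
  intros Hw Hx Hx'.
  pose proof (partials_lipschitz w Hw x (y x) x' (y x') (y_in_rect x Hx) (y_in_rect x' Hx')).
  pose proof (solution_lipschitz x x' Hx Hx'). unfold along; lra.
Qed.

Lemma increment_in_y w : (length w < beta)%nat -> forall x x' z z',
  rect x0 y0 a b x z -> rect x0 y0 a b x' z -> rect x0 y0 a b x' z' ->
  Rabs (G w x' z' - G w x' z - G (false :: w) x z * (z' - z))
    <= (Rabs (x' - x) + Rabs (z' - z)) * Rabs (z' - z).
Proof.
  intros Hw x x' z z' Hr [Hx' Hz] [_ Hz'].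
  apply (increment_bound (y0 - b) (y0 + b) (fun s => G w x' s) (fun s => G (false :: w) x' s));
    auto.
  - intros s Hs; apply G_deriv; auto; split; auto.
  - intros s Hs.
    eapply Rle_trans.
    + apply partials_lipschitz; [simpl; lia| exact Hr|].
      split; auto; exact (cint_between y0 b z z' s Hz Hz' Hs).
    + pose proof (Rabs_between _ _ _ Hs); lra.
Qed.

Lemma along_deriv w : (length w < beta)%nat -> forall x, cint x0 a x ->
  has_deriv_within (cint x0 a) (fun s => along s w) x
    (along x (true :: w) + along x (false :: w) * along x nil).
Proof.
  intros Hw x Hx eps Heps.
  destruct (y_deriv x Hx (eps / 4)) as [dy [Hdy Hy]]; [lra|].
  destruct (proj1 (G_deriv w Hw x (y x) (y_in_rect x Hx)) (eps / 4)) as [dg [Hdg Hg]]; [lra|].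
  exists (Rmin (Rmin dy dg) (eps / 4)); split; [repeat apply Rmin_glb_lt; lra|].
  intros h Hh Hhd Ih.
  pose proof (Rmin_l (Rmin dy dg) (eps / 4)); pose proof (Rmin_r (Rmin dy dg) (eps / 4)).
  pose proof (Rmin_l dy dg); pose proof (Rmin_r dy dg).
  specialize (Hy h Hh ltac:(lra) Ih); specialize (Hg h Hh ltac:(lra) Ih).
  unfold along; rewrite G_nil by auto.
  set (X := x + h) in *.
  set (Gy := G (false :: w) x (y x)).
  set (A := G w X (y X) - G w X (y x) - Gy * (y X - y x)).
  assert (Hyh : Rabs (y X - y x) <= Rabs h).
  { replace h with (X - x) by (unfold X; ring). apply solution_lipschitz; auto. }
  assert (HA : Rabs A <= 2 * Rabs h * Rabs h).
  { eapply Rle_trans.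
    { apply increment_in_y; auto. split; [exact Ih| apply (proj2 (y_in_rect x Hx))]. }
    replace (X - x) with h by (unfold X; ring).
    pose proof (Rabs_pos (y X - y x)); pose proof (Rabs_pos h); nra. }
  assert (HAh : Rabs (A / h) <= 2 * Rabs h).
  { assert (0 < Rabs h) by (apply Rabs_pos_lt; auto).
    unfold Rdiv; rewrite Rabs_mult, Rabs_inv.
    apply Rmult_le_reg_r with (Rabs h); auto.
    replace (Rabs A * / Rabs h * Rabs h) with (Rabs A) by (field; lra); lra. }
  assert (HGy : Rabs Gy <= 1) by (apply G_bound; [simpl; lia| auto]).
  assert (HGyy : Rabs (Gy * ((y X - y x) / h - f x (y x))) <= eps / 4).
  { rewrite Rabs_mult; pose proof (Rabs_pos ((y X - y x) / h - f x (y x))); nra. }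
  replace ((G w X (y X) - G w x (y x)) / h - (G (true :: w) x (y x) + Gy * f x (y x)))
    with (A / h + Gy * ((y X - y x) / h - f x (y x))
          + ((G w X (y x) - G w x (y x)) / h - G (true :: w) x (y x)))
    by (unfold A; field; auto).
  eapply Rle_lt_trans; [apply Rabs_triang|].
  eapply Rle_lt_trans; [apply Rplus_le_compat_r, Rabs_triang|].
  lra.
Qed.

Lemma eval_mono_along_deriv m : (forall w, In w m -> (length w < beta)%nat) ->
  forall x, cint x0 a x ->
  has_deriv_within (cint x0 a) (fun s => eval_mono (along s) m) x (eval_poly (along x) (dmono m)).
Proof.
  induction m as [|w m IH]; intros Hm x Hx; simpl; [apply has_deriv_within_const|].
  pose proof (has_deriv_within_mult (x0 - a) (x0 + a) _ _ x _ _ Hx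
    (along_deriv w (Hm w (or_introl eq_refl)) x Hx)
    (IH (fun w' Hw' => Hm w' (or_intror Hw')) x Hx)) as Hprod.
  rewrite eval_poly_map_cons.
  match type of Hprod with has_deriv_within _ _ _ ?l =>
    match goal with |- has_deriv_within _ _ _ ?l' => replace l' with l by ring end end.
  exact Hprod.
Qed.

Lemma eval_poly_along_deriv P : (forall m w, In m P -> In w m -> (length w < beta)%nat) ->
  forall x, cint x0 a x ->
  has_deriv_within (cint x0 a) (fun s => eval_poly (along s) P) x (eval_poly (along x) (dpoly P)).
Proof.
  induction P as [|m P IH]; intros HP x Hx; simpl; [apply has_deriv_within_const|].
  rewrite eval_poly_app; apply has_deriv_within_plus.
  - apply eval_mono_along_deriv; auto; intros w Hw; apply (HP m w); simpl; auto.
  - apply IH; auto; intros m' w Hm' Hw; apply (HP m' w); simpl; auto.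
Qed.

Definition sol_deriv (k : nat) (x : R) : R :=
  match k with O => y x | S k => eval_poly (along x) (sol_poly k) end.

Lemma sol_deriv_deriv k : (k <= beta)%nat -> forall x, cint x0 a x ->
  has_deriv_within (cint x0 a) (sol_deriv k) x (sol_deriv (S k) x).
Proof.
  intros Hk x Hx; destruct k as [|k].
  - replace (sol_deriv 1 x) with (f x (y x)); [exact (y_deriv x Hx)|].
    simpl; unfold along; rewrite G_nil by auto; ring.
  - apply eval_poly_along_deriv; auto.
    intros m w Hm Hw; pose proof (sol_poly_words k m w Hm Hw); lia.
Qed.

Lemma along_bound w x : (length w <= beta)%nat -> cint x0 a x -> Rabs (along x w) <= 1.
Proof. intros Hw Hx; apply G_bound; auto. Qed.

Lemma sol_deriv_bound k : (1 <= k <= beta + 1)%nat -> forall x, cint x0 a x ->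
  Rabs (sol_deriv k x) <= 2 ^ (k - 1) * INR (fact (k - 1)).
Proof.
  intros Hk x Hx; destruct k as [|k]; [lia|].
  replace (S k - 1)%nat with k by lia.
  eapply Rle_trans.
  - apply eval_poly_bound; intros m w Hm Hw; apply along_bound; auto.
    pose proof (sol_poly_words k m w Hm Hw); lia.
  - rewrite <- INR_pow2_fact. apply le_INR, length_sol_poly_le.
Qed.

Lemma sol_deriv_lipschitz x x' : cint x0 a x -> cint x0 a x' ->
  Rabs (sol_deriv (beta + 1) x - sol_deriv (beta + 1) x')
    <= 2 ^ (beta + 1) * INR (fact (beta + 1)) * Rabs (x - x').
Proof.
  intros Hx Hx'; rewrite Nat.add_1_r; simpl sol_deriv.
  pose proof (Rabs_pos (x - x')).
  eapply Rle_trans.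
  - apply (eval_poly_lipschitz _ _ (2 * Rabs (x - x')) (S beta)); [| apply sol_poly_degree| lra].
    intros m w Hm Hw; pose proof (sol_poly_words beta m w Hm Hw).
    split; [|split]; try apply along_bound; auto.
    apply along_lipschitz; auto.
  - pose proof (le_INR _ _ (length_sol_poly_le beta)) as Hlen.
    rewrite INR_pow2_fact in Hlen.
    replace (2 ^ S beta * INR (fact (S beta)) * Rabs (x - x'))
      with (2 ^ beta * INR (fact beta) * (INR (S beta) * (2 * Rabs (x - x')))).
    + pose proof (pos_INR (S beta)). apply Rmult_le_compat_r; [nra| exact Hlen].
    + change (fact (S beta)) with (S beta * fact beta)%nat; rewrite mult_INR; simpl pow; ring.
Qed.

End AlongSolution.

(* The estimates hold on the whole of [x0 - a, x0 + a]. *)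
Theorem lemma3p2 (beta : nat) (x0 y0 a b : R) (f : R -> R -> R)
  (G : list bool -> R -> R -> R) (y : R -> R) :
  0 < a -> 0 < b ->
  cont_on_rect x0 y0 a b f ->
  partials_family x0 y0 a b beta f G ->
  (forall w, (length w <= beta)%nat -> forall x y', rect x0 y0 a b x y' ->
     Rabs (G w x y') <= 1) ->
  (forall w, length w = beta -> forall x y' x' y'',
     rect x0 y0 a b x y' -> rect x0 y0 a b x' y'' ->
     Rabs (G w x y' - G w x' y'') <= Rmax (Rabs (x - x')) (Rabs (y' - y''))) ->
  (forall x, cint x0 a x -> rect x0 y0 a b x (y x)) ->
  (forall x, cint x0 a x -> has_deriv_within (cint x0 a) y x (f x (y x))) ->
  y x0 = y0 ->
  exists Y : nat -> R -> R,
    (forall x, cint x0 a x -> Y 0%nat x = y x) /\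
    (forall k, (k <= beta)%nat -> forall x, cint x0 a x ->
       has_deriv_within (cint x0 a) (Y k) x (Y (S k) x)) /\
    (forall x x', cint x0 (Rmin a b) x -> cint x0 (Rmin a b) x' ->
       (forall k, (1 <= k <= beta + 1)%nat ->
          Rabs (Y k x) <= 2 ^ (k - 1) * INR (fact (k - 1))) /\
       Rabs (Y (beta + 1)%nat x - Y (beta + 1)%nat x')
         <= 2 ^ (beta + 1) * INR (fact (beta + 1)) * Rabs (x - x')).
Proof.
  intros _ _ _ HG Hbound Hlip Hrect Hy _.
  assert (Hsub : forall t, cint x0 (Rmin a b) t -> cint x0 a t).
  { unfold cint; intros t Ht; pose proof (Rmin_l a b); lra. }
  exists (sol_deriv G y); split; [reflexivity| split].
  - exact (sol_deriv_deriv beta x0 y0 a b f G y HG Hbound Hlip Hrect Hy).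
  - intros x x' Hx Hx'; split.
    + intros k Hk; exact (sol_deriv_bound beta x0 y0 a b G y Hbound Hrect k Hk x (Hsub x Hx)).
    + exact (sol_deriv_lipschitz beta x0 y0 a b f G y HG Hbound Hlip Hrect Hy x x'
               (Hsub x Hx) (Hsub x' Hx')).
Qed.
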